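(* Let $\mathcal{C}$ be a partition of a finite set $E$ (a covering by pairwise disjoint nonempty sets). Then $SH$, $XH$, $VH$ are closure operators of matroids on $E$, and $\mathcal{I}_{SH}(\mathcal{C})=\mathcal{I}_{XH}(\mathcal{C})=\mathcal{I}_{VH}(\mathcal{C})=\mathcal{I}(\mathcal{C})$ and $\mathcal{L}_{SH}(M(\mathcal{C}))=\mathcal{L}_{XH}(M(\mathcal{C}))=\mathcal{L}_{VH}(M(\mathcal{C}))=\mathcal{L}(M(\mathcal{C}))$.
   Context: For a covering $\mathcal{C}$ of $E$ and $x\in E$: $N(x)=\bigcap\{K\in\mathcal{C}:x\in K\}$. For $X\subseteq E$: $SH(X)=\bigcup\{K\in\mathcal{C}:K\cap X\neq\emptyset\}$, $XH(X)=\{x:N(x)\cap X\neq\emptyset\}$, $VH(X)=\bigcup\{N(x):N(x)\cap X\neq\emptyset\}$. When $H\in\{SH,XH,VH\}$ is the closure operator of a matroid on $E$, $\mathcal{I}_H(\mathcal{C})=\{I\subseteq E:x\notin H(I-\{x\})\ \forall x\in I\}$ is its family of independent sets and $\mathcal{L}_H(M(\mathcal{C}))=\{X:H(X)=X\}$ its set of closed sets. $\mathcal{I}(\mathcal{C})$ is the family of partial transversals of $\mathcal{C}$ (sets of distinct elements $e_1,\dots,e_k$ with $e_j\in K_{i_j}$ for distinct blocks $K_{i_1},\dots,K_{i_k}$), i.e. the independent sets of the transversal matroid $M(\mathcal{C})$, and $\mathcal{L}(M(\mathcal{C}))$ is the set of closed sets of $M(\mathcal{C})$, where $cl(X)=\{a:r(X\cup\{a\})=r(X)\}$.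 *)

From mathcomp Require Import all_boot.
Set Implicit Arguments. Unset Strict Implicit. Unset Printing Implicit Defensive.

Section Defs.
Variable T : finType.
Variable C : {set {set T}}.

Definition Nb (x : T) : {set T} := \bigcap_(K in C | x \in K) K.

Definition SH (X : {set T}) : {set T} :=
  \bigcup_(K in C | [exists y, (y \in K) && (y \in X)]) K.

Definition XH (X : {set T}) : {set T} :=
  [set x | [exists y, (y \in Nb x) && (y \in X)]].

Definition VH (X : {set T}) : {set T} :=
  \bigcup_(x | [exists y, (y \in Nb x) && (y \in X)]) Nb x.

Definition ptrans (I : {set T}) : bool :=
  [exists f : {ffun T -> {set T}},
     [forall x in I, (f x \in C) && (x \in f x)] &&
     [forall x in I, forall y in I, (f x == f y) ==> (x == y)]].

Definition Itrans : {set {set T}} := [set I | ptrans I].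

Definition trank (X : {set T}) : nat :=
  \max_(I : {set T} | (I \subset X) && ptrans I) #|I|.

Definition tcl (X : {set T}) : {set T} :=
  [set a | trank (a |: X) == trank X].

Definition Ltrans : {set {set T}} := [set X | tcl X == X].

End Defs.

Section Closure.
Variable T : finType.

Definition matroid_closure (H : {set T} -> {set T}) : Prop :=
  [/\ forall X : {set T}, X \subset H X,
      forall X Y : {set T}, X \subset Y -> H X \subset H Y,
      forall X : {set T}, H (H X) = H X &
      forall (X : {set T}) (x y : T), y \in H (x |: X) -> y \notin H X -> x \in H (y |: X)].

Definition IH (H : {set T} -> {set T}) : {set {set T}} :=
  [set I : {set T} | [forall x in I, x \notin H (I :\ x)]].

Definition LH (H : {set T} -> {set T}) : {set {set T}} :=
  [set X : {set T} | H X == X].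
End Closure.

From mathcomp Require Import all_boot.
Set Implicit Arguments. Unset Strict Implicit. Unset Printing Implicit Defensive.

(* For a partition, N(x) is the block of x, so SH, XH and VH all send X to the
   union of the blocks meeting X, i.e. to the preimage under [pblock C] of the
   image of X.  For any map f, the operator X |-> f^-1(f(X)) is the closure of
   the matroid whose parallel classes are the fibers of f: its independent
   sets are the sets on which f is injective, and its rank is #|f(X)|.  When f
   is [pblock C] these are exactly the partial transversals of C and the rank of
   the transversal matroid M(C). *)

Section FiberClosure.
Variables (T rT : finType) (f : T -> rT).

Definition fiber_closure (X : {set T}) : {set T} := f @^-1: (f @: X).

Lemma fiber_closure_matroid : matroid_closure fiber_closure.
Proof.
split=> [X | X Y sXY | X | X x y].
- by apply/subsetP=> x xX; rewrite inE imset_f.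
- by apply/subsetP=> x; rewrite !inE; apply/subsetP/imsetS.
- apply/setP=> x; rewrite !inE; apply/imsetP/imsetP=> [[y] | [y yX ->]].
    by rewrite inE => /imsetP[z zX ->] ->; exists z.
  by exists y; rewrite // inE imset_f.
- by rewrite !inE !imsetU1 => /setU1P[-> _ | -> //]; rewrite setU11.
Qed.

Lemma fiber_closure_independentP (I : {set T}) :
  reflect {in I &, injective f} (I \in IH fiber_closure).
Proof.
rewrite inE; apply: (iffP forall_inP) => [free x y xI yI fxy | inj x xI].
  apply: contraNeq (free x xI) => neq_xy; rewrite inE.
  by apply/imsetP; exists y; rewrite // !inE eq_sym neq_xy.
rewrite inE; apply/imsetP=> -[y]; rewrite !inE => /andP[neq_yx yI] /(inj _ _ xI yI) xy.
by rewrite xy eqxx in neq_yx.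
Qed.

Lemma exists_image_section (X : {set T}) :
  exists I : {set T}, [/\ I \subset X, {in I &, injective f} & f @: I = f @: X].
Proof.
pose g x := odflt x [pick z in X | f z == f x].
have gP x : x \in X -> g x \in X /\ f (g x) = f x.
  rewrite /g; case: pickP => [z /andP[zX /eqP] // | /(_ x)].
  by rewrite eqxx andbT => /negbT/negP.
have g_f x y : x \in X -> f x = f y -> g x = g y.
  move=> xX fxy; rewrite /g fxy; case: pickP => // /(_ x).
  by rewrite xX fxy eqxx.
exists (g @: X); split.
- by apply/subsetP=> _ /imsetP[x xX ->]; case: (gP x xX).
- move=> _ _ /imsetP[x xX ->] /imsetP[y yX ->].
  by case: (gP x xX) (gP y yX) => _ -> [_ ->] /(g_f _ _ xX).
- by rewrite -imset_comp; apply: eq_in_imset => x /gP[].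
Qed.

End FiberClosure.

Section ExtensionalClosure.
Variables (T : finType) (H H' : {set T} -> {set T}).
Hypothesis eqH : H =1 H'.

Lemma eq_matroid_closure : matroid_closure H -> matroid_closure H'.
Proof.
case=> ext mono idem exch; split=> [X | X Y | X | X x y]; rewrite -!eqH.
- exact: ext.
- exact: mono.
- exact: idem.
- exact: exch.
Qed.

Lemma eq_IH : IH H = IH H'.
Proof. by apply/setP=> I; rewrite !inE; apply: eq_forallb => x; rewrite eqH. Qed.

Lemma eq_LH : LH H = LH H'.
Proof. by apply/setP=> X; rewrite !inE eqH. Qed.

End ExtensionalClosure.

Section Partition.
Variables (T : finType) (C : {set {set T}}).
Hypothesis partC : partition C [set: T].

Let tiC : trivIset C. Proof. by case/and3P: partC. Qed.

Let coverC x : x \in cover C.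
Proof. by case/and3P: partC => /eqP-> _ _; rewrite inE. Qed.

Let pblockC x : pblock C x \in C. Proof. exact: pblock_mem. Qed.

Let mem_pblockC x : x \in pblock C x. Proof. by rewrite mem_pblock. Qed.

Let in_pblockC x y : (y \in pblock C x) = (pblock C x == pblock C y).
Proof. by rewrite eq_pblock. Qed.

Lemma Nb_pblock x : Nb C x = pblock C x.
Proof.
apply/setP=> y; apply/bigcapP/idP => [yN | yx K /andP[CK xK]].
  by apply: yN; rewrite pblockC mem_pblockC.
by rewrite -(def_pblock tiC CK xK).
Qed.

Lemma meets_NbE x (X : {set T}) :
  [exists y, (y \in Nb C x) && (y \in X)] = (pblock C x \in pblock C @: X).
Proof.
apply/existsP/imsetP=> [[y /andP[]] | [y yX xy]].
  by rewrite Nb_pblock in_pblockC => /eqP-> yX; exists y.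
by exists y; rewrite Nb_pblock in_pblockC xy eqxx yX.
Qed.

Lemma XH_fiber : XH C =1 fiber_closure (pblock C).
Proof. by move=> X; apply/setP=> x; rewrite !inE meets_NbE. Qed.

Lemma SH_fiber : SH C =1 fiber_closure (pblock C).
Proof.
move=> X; apply/setP=> x; rewrite inE; apply/bigcupP/imsetP.
  case=> K /andP[CK /existsP[y /andP[yK yX]]] xK.
  by exists y; rewrite // (def_pblock tiC CK xK) (def_pblock tiC CK yK).
case=> y yX xy; exists (pblock C x) => //.
by rewrite pblockC; apply/existsP; exists y; rewrite yX in_pblockC xy andbT.
Qed.

Lemma VH_fiber : VH C =1 fiber_closure (pblock C).
Proof.
move=> X; apply/setP=> y; rewrite inE; apply/bigcupP/imsetP.
  case=> x; rewrite meets_NbE Nb_pblock in_pblockC => /imsetP[z zX xz] /eqP yx.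
  by exists z; rewrite -?yx.
case=> z zX yz; exists y; last by rewrite Nb_pblock.
by rewrite meets_NbE yz imset_f.
Qed.

Lemma ptransP (I : {set T}) : reflect {in I &, injective (pblock C)} (ptrans C I).
Proof.
apply: (iffP existsP) => [[F /andP[/forall_inP FI /forall_inP Finj]] | inj].
  move=> x y xI yI xy; have /andP[CFx xFx] := FI x xI; have /andP[CFy yFy] := FI y yI.
  apply/eqP/(implyP (forall_inP (Finj x xI) y yI)).
  by rewrite -(def_pblock tiC CFx xFx) -(def_pblock tiC CFy yFy) xy.
exists [ffun x => pblock C x]; apply/andP; split.
  by apply/forall_inP=> x _; rewrite ffunE pblockC mem_pblockC.
apply/forall_inP=> x xI; apply/forall_inP=> y yI; rewrite !ffunE.
by apply/implyP=> /eqP/inj-> //.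
Qed.

Lemma trank_card (X : {set T}) : trank C X = #|pblock C @: X|.
Proof.
apply/eqP; rewrite eqn_leq; apply/andP; split.
  apply/bigmax_leqP=> I /andP[sIX /ptransP inj].
  by rewrite -(card_in_imset inj) subset_leq_card ?imsetS.
have [I [sIX inj <-]] := exists_image_section (pblock C) X.
rewrite (card_in_imset inj) /trank.
by apply: (leq_bigmax_cond I); rewrite sIX; apply/ptransP.
Qed.

Lemma tcl_fiber : tcl C =1 fiber_closure (pblock C).
Proof.
move=> X; apply/setP=> a; rewrite !inE !trank_card imsetU1 cardsU1.
by case: (_ \in _); rewrite ?eqxx // -[X in _ == X]add0n eqn_add2r.
Qed.

Lemma IH_fiber_pblock : IH (fiber_closure (pblock C)) = Itrans C.
Proof.
apply/setP=> I; rewrite [in RHS]inE.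
by apply/fiber_closure_independentP/ptransP.
Qed.

End Partition.

Theorem theorem13 (T : finType) (C : {set {set T}}) :
  partition C [set: T] ->
  [/\ matroid_closure (SH C), matroid_closure (XH C), matroid_closure (VH C),
      [/\ IH (SH C) = IH (XH C), IH (XH C) = IH (VH C) & IH (VH C) = Itrans C] &
      [/\ LH (SH C) = LH (XH C), LH (XH C) = LH (VH C) & LH (VH C) = Ltrans C]].
Proof.
move=> partC; have mcl := fiber_closure_matroid (pblock C).
have eqS := SH_fiber partC; have eqX := XH_fiber partC; have eqV := VH_fiber partC.
have eqT := tcl_fiber partC.
split; do ?[exact: eq_matroid_closure (fsym _) mcl].
- by rewrite (eq_IH eqS) (eq_IH eqX) (eq_IH eqV) IH_fiber_pblock.
- by rewrite (eq_LH eqS) (eq_LH eqX) (eq_LH eqV) -(eq_LH eqT).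
Qed.
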